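(* Let $0<s_1<s_2$, $m\ge1$, and set $\alpha=\frac1{s_1}+\frac1{s_2}$, $\beta_1=-\frac1{s_1}$, $\beta_2=-\frac1{s_2}$. Then the matrix $A_{2m}^{(\beta_2,0)}(\alpha,\beta_1,\beta_2)$ has no eigenvalue in the interval $\Gamma=\big(\frac2{s_2},\frac2{s_1}\big)$; equivalently, no eigenvalue $\lambda$ with $\lambda-\alpha\in(\beta_1-\beta_2,\beta_2-\beta_1)$.
   Context: $A_{2m}^{(a,b)}(\alpha,\beta_1,\beta_2)\in\mathbb R^{2m\times 2m}$ denotes the symmetric tridiagonal matrix with diagonal entries $(\alpha+a,\alpha,\dots,\alpha,\alpha+b)$ and $(i,i+1)$ off-diagonal entries equal to $\beta_1$ for $i$ odd and $\beta_2$ for $i$ even, $1\le i\le 2m-1$. (Removing the central row and column of the defect capacitance matrix yields a block-diagonal matrix whose blocks are this matrix and its conjugate by the reversal permutation.) *)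

From HB Require Import structures.
From mathcomp Require Import all_boot all_order all_algebra.
Set Implicit Arguments. Unset Strict Implicit. Unset Printing Implicit Defensive.
Import Order.TTheory GRing.Theory Num.Theory.
Local Open Scope ring_scope.

(* A_n^{(a,b)}(alpha, beta1, beta2): symmetric tridiagonal n x n matrix with
   diagonal (alpha + a, alpha, ..., alpha, alpha + b) and (i,i+1) entry
   beta1 for i odd, beta2 for i even (1-based i).  With 0-based indices
   (ordinals), the (k,k+1) entry is beta1 when k is even, beta2 when k odd. *)
Definition Atri (R : nzRingType) (n : nat) (a b alpha beta1 beta2 : R) : 'M[R]_n :=
  \matrix_(i < n, j < n)
    if i == j then
      alpha + (if (i : nat) == 0%N then a else 0)
            + (if (i : nat) == n.-1 then b else 0)
    else if ((j : nat) == i.+1) || ((i : nat) == j.+1) then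
      (if odd (minn i j) then beta2 else beta1)
    else 0.

(* Put x = lambda - alpha, a = 1/s1, b = 1/s2 and split an eigenvector f into
   u_i = f_(2i) and w_i = f_(2i-1), where w_0 := f_0 mirrors site 0, so that the
   corner entry alpha + beta2 reads as one more bond beta2.  The eigen-equations become
     x u_i + b w_i + a w_(i+1) = 0,   x w_(i+1) + a u_i + b u_(i+1) = 0,   u_m = 0,
   so x w = - T u for the bidiagonal T = a + b * shift.  Eliminating w, the sum of
   |(T u)_i|^2 - x^2 u_i^2 telescopes to b x u_0^2, whereas
   |T u|^2 >= (a - b)^2 |u|^2 + b (a - b) u_0^2.  When |x| < a - b this forces u = 0,
   and then w = 0 by recursion. *)

From HB Require Import structures.
From mathcomp Require Import all_boot all_order all_algebra.
From mathcomp Require Import ring lra zify.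
Set Implicit Arguments. Unset Strict Implicit. Unset Printing Implicit Defensive.
Import Order.TTheory GRing.Theory Num.Theory.
Local Open Scope ring_scope.

Lemma big_nat_restrict (R : nmodType) (g : nat -> R) lo hi p q :
    (lo <= p)%N -> (p <= q)%N -> (q <= hi)%N ->
    (forall j, (lo <= j < p)%N || (q <= j < hi)%N -> g j = 0) ->
  \sum_(lo <= j < hi) g j = \sum_(p <= j < q) g j.
Proof.
move=> lo_p p_q q_hi g0.
have outside_zero r t : (forall j, (r <= j < t)%N -> g j = 0) -> \sum_(r <= j < t) g j = 0.
  by move=> gz; rewrite big_nat_cond big1 // => j /andP[/gz].
rewrite (@big_cat_nat _ _ _ p lo hi) ?(leq_trans p_q q_hi) //=.
rewrite (@big_cat_nat _ _ _ q p hi) //= (outside_zero lo p) ?(outside_zero q hi).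
- by rewrite add0r addr0.
all: by move=> j j_in; apply: g0; rewrite j_in ?orbT.
Qed.

Definition row_seq (R : nmodType) n (v : 'rV[R]_n) (j : nat) : R :=
  if (insub j : option 'I_n) is Some j' then v 0 j' else 0.

Lemma row_seq_ord (R : nmodType) n (v : 'rV[R]_n) (j : 'I_n) : row_seq v j = v 0 j.
Proof. by rewrite /row_seq valK. Qed.

Lemma row_seq_out (R : nmodType) n (v : 'rV[R]_n) j : (n <= j)%N -> row_seq v j = 0.
Proof. by move=> le_nj; rewrite /row_seq insubF // ltnNge le_nj. Qed.

Lemma Atri_row (R : nzRingType) n (a b alpha beta1 beta2 : R) (v : 'rV[R]_n) (k : 'I_n) :
  (v *m Atri n a b alpha beta1 beta2) 0 k =
    (if (k : nat) is k'.+1 then row_seq v k' * (if odd k' then beta2 else beta1) else 0)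
    + row_seq v k * (alpha + (if k == 0%N :> nat then a else 0)
                           + (if k == n.-1 :> nat then b else 0))
    + row_seq v k.+1 * (if odd k then beta2 else beta1).
Proof.
pose c (i j : nat) := if i == j then alpha + (if i == 0%N then a else 0)
                                          + (if i == n.-1 then b else 0)
  else if (j == i.+1) || (i == j.+1) then (if odd (minn i j) then beta2 else beta1)
  else 0.
transitivity (\sum_(0 <= j < n) row_seq v j * c j k).
  by rewrite mxE big_mkord; apply: eq_bigr => j _; rewrite row_seq_ord mxE.
rewrite -(@big_nat_restrict _ (fun j => row_seq v j * c j k) 0 (maxn n k.+2) 0 n)
  ?leq_maxl //; last first.
  by move=> j; rewrite ltn0 andbF => /andP[le_nj _]; rewrite row_seq_out ?mul0r.
have k_band : (k.-1 <= k.+2)%N by lia.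
rewrite (@big_nat_restrict _ (fun j => row_seq v j * c j k) 0 (maxn n k.+2) k.-1 k.+2)
  ?leq_maxr //; last first.
  by move=> j /orP[] /andP[j_lo j_hi]; rewrite /c !ifN ?mulr0 //; lia.
case: k k_band => [[|k] lt_kn] _ /=.
  by rewrite big_ltn // big_ltn // big_geq // /c /= add0r addr0.
rewrite big_ltn; last lia.
rewrite big_ltn; last lia.
rewrite big_ltn // big_geq // /c (ltn_eqF (ltnSn k)) (gtn_eqF (ltnSn k.+1)) !eqxx orbT /=.
by rewrite (minn_idPl (leqnSn k)) (minn_idPr (leqnSn k.+1)) !addrA !addr0.
Qed.

Section AtriEigenvector.

Variables (R : comNzRingType) (m : nat) (alpha beta1 beta2 lambda : R).
Variable v : 'rV[R]_(2 * m).
Hypothesis eigv : v *m Atri (2 * m) beta2 0 alpha beta1 beta2 = lambda *: v.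

Let eigen_row k (lt_k : (k < 2 * m)%N) :
  (v *m Atri (2 * m) beta2 0 alpha beta1 beta2) 0 (Ordinal lt_k) = lambda * row_seq v k.
Proof. by rewrite eigv mxE -row_seq_ord. Qed.

(* For i = 0 the truncated [0.*2.-1 = 0] turns the corner entry alpha + beta2
   into a bond beta2 to a mirror copy of site 0. *)
Lemma Atri_eigen_even i : (i < m)%N ->
  beta2 * row_seq v i.*2.-1 + alpha * row_seq v i.*2 + beta1 * row_seq v i.*2.+1
    = lambda * row_seq v i.*2.
Proof.
move=> lt_im; have lt_k : (i.*2 < 2 * m)%N by lia.
rewrite -eigen_row Atri_row if_same /=.
by case: i {lt_im lt_k} => [|i]; rewrite ?double0 ?doubleS /= ?odd_double /=; ring.
Qed.

Lemma Atri_eigen_odd i : (i < m)%N ->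
  beta1 * row_seq v i.*2 + alpha * row_seq v i.*2.+1 + beta2 * row_seq v i.*2.+2
    = lambda * row_seq v i.*2.+1.
Proof.
move=> lt_im; have lt_k : (i.*2.+1 < 2 * m)%N by lia.
by rewrite -eigen_row Atri_row if_same /= odd_double /=; ring.
Qed.

End AtriEigenvector.

Lemma sum_sqr_bidiag_ge (R : realFieldType) (a b : R) (u : nat -> R) m :
  0 <= a * b -> u m = 0 ->
  (a - b) ^+ 2 * \sum_(i < m) u i ^+ 2 + b * (a - b) * u 0 ^+ 2
    <= \sum_(i < m) (a * u i + b * u i.+1) ^+ 2.
Proof.
move=> ab_ge0 um.
have pointwise i : (a - b) ^+ 2 * u i ^+ 2 + b * (a - b) * (u i ^+ 2 - u i.+1 ^+ 2)
    <= (a * u i + b * u i.+1) ^+ 2.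
  rewrite -subr_ge0; have -> : (a * u i + b * u i.+1) ^+ 2 -
     ((a - b) ^+ 2 * u i ^+ 2 + b * (a - b) * (u i ^+ 2 - u i.+1 ^+ 2))
     = a * b * (u i + u i.+1) ^+ 2 by ring.
  by rewrite mulr_ge0 ?sqr_ge0.
have tele : \sum_(i < m) (u i ^+ 2 - u i.+1 ^+ 2) = u 0 ^+ 2.
  rewrite -(big_mkord xpredT (fun i => u i ^+ 2 - u i.+1 ^+ 2)).
  rewrite (@telescope_sumr_eq _ 0 m (fun i => - u i ^+ 2)) // => [|i _].
    by rewrite um expr0n /= oppr0 add0r opprK.
  by rewrite opprK addrC.
rewrite -tele mulr_sumr mulr_sumr -big_split /=; exact: ler_sum.
Qed.

Section DimerChain.

Variables (R : realFieldType) (a b x : R) (m : nat) (u w : nat -> R).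

Hypotheses (eq_even : forall i, (i < m)%N -> x * u i + b * w i + a * w i.+1 = 0)
           (eq_odd : forall i, (i < m)%N -> x * w i.+1 + a * u i + b * u i.+1 = 0)
           (u_end : u m = 0) (w_mirror : w 0 = u 0).

Lemma dimer_energy_identity :
  x ^+ 2 * \sum_(i < m) u i ^+ 2 + b * x * u 0 ^+ 2
    = \sum_(i < m) (a * u i + b * u i.+1) ^+ 2.
Proof.
have step i : (i < m)%N -> (a * u i + b * u i.+1) ^+ 2 - x ^+ 2 * u i ^+ 2
    = b * x * (u i * w i) - b * x * (u i.+1 * w i.+1).
  move=> lt_im; apply/eqP; rewrite -subr_eq0; apply/eqP.
  transitivity ((a * u i + b * u i.+1) * (x * w i.+1 + a * u i + b * u i.+1)
                - x * u i * (x * u i + b * w i + a * w i.+1)); first by ring.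
  by rewrite eq_odd // eq_even //; ring.
rewrite mulr_sumr -[RHS](subrK (\sum_(i < m) x ^+ 2 * u i ^+ 2)) -sumrB addrC.
congr (_ + _); apply/esym.
rewrite -(big_mkord xpredT (fun i => (a * u i + b * u i.+1) ^+ 2 - x ^+ 2 * u i ^+ 2)).
rewrite (@telescope_sumr_eq _ 0 m (fun i => - (b * x * (u i * w i)))) //.
  by rewrite u_end w_mirror mul0r mulr0 oppr0 add0r opprK -expr2.
by move=> i /andP[_ lt_im]; rewrite step // opprK addrC.
Qed.

Lemma dimer_eigvec_eq0 : 0 <= b -> `|x| < a - b ->
  forall i, (i <= m)%N -> u i = 0 /\ w i = 0.
Proof.
move=> b_ge0 /ltr_normlP[x_gt x_lt].
have gap : 0 < (a - b) ^+ 2 - x ^+ 2 by nra.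
have a_gt0 : 0 < a by lra.
have sum_le0 : ((a - b) ^+ 2 - x ^+ 2) * \sum_(i < m) u i ^+ 2
               + b * (a - b - x) * u 0 ^+ 2 <= 0.
  have := sum_sqr_bidiag_ge (mulr_ge0 (ltW a_gt0) b_ge0) u_end.
  rewrite -dimer_energy_identity; lra.
have edge_ge0 : 0 <= b * (a - b - x) * u 0 ^+ 2.
  by rewrite mulr_ge0 ?sqr_ge0 // mulr_ge0 // subr_ge0 ltW.
have sum_eq0 : \sum_(i < m) u i ^+ 2 = 0.
  apply/le_anti; rewrite sumr_ge0 => [|i _]; last exact: sqr_ge0.
  by rewrite andbT -(pmulr_rle0 _ gap); lra.
have u0 i : (i <= m)%N -> u i = 0.
  rewrite leq_eqVlt => /orP[/eqP -> // | lt_im].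
  have /psumr_eq0P/(_ sum_eq0 (Ordinal lt_im) isT)/eqP :
      forall j : 'I_m, true -> 0 <= u j ^+ 2 by move=> j _; exact: sqr_ge0.
  by rewrite sqrf_eq0 => /eqP.
elim=> [|i IHi] lt_im; first by rewrite w_mirror u0.
split; first exact: u0.
have [ui wi] := IHi (ltnW lt_im).
have := eq_even lt_im; rewrite ui wi.
by rewrite !mulr0 !add0r => /eqP; rewrite mulf_eq0 gt_eqF //= => /eqP.
Qed.

End DimerChain.

Theorem mainTheorem6 (R : realFieldType) (s1 s2 : R) (m : nat)
  (hs1 : 0 < s1) (hs12 : s1 < s2) (hm : (1 <= m)%N) :
  let alpha := s1^-1 + s2^-1 in
  let beta1 := - s1^-1 in
  let beta2 := - s2^-1 in
  forall lambda : R, 2 / s2 < lambda -> lambda < 2 / s1 ->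
    ~~ eigenvalue (Atri (2 * m)%N beta2 0 alpha beta1 beta2) lambda.
Proof.
move=> alpha beta1 beta2 lambda gt_lambda lt_lambda.
apply/negP => /eigenvalueP [v eigv v_neq0].
pose u i := row_seq v i.*2; pose w i := row_seq v i.*2.-1.
have eq_even i : (i < m)%N ->
    (lambda - alpha) * u i + s2^-1 * w i + s1^-1 * w i.+1 = 0.
  by move=> /(Atri_eigen_even eigv); rewrite /alpha /beta1 /beta2 /u /w => ?; lra.
have eq_odd i : (i < m)%N ->
    (lambda - alpha) * w i.+1 + s1^-1 * u i + s2^-1 * u i.+1 = 0.
  by move=> /(Atri_eigen_odd eigv); rewrite /alpha /beta1 /beta2 /u /w => ?; lra.
have u_end : u m = 0 by rewrite /u row_seq_out // -mul2n.
have b_ge0 : 0 <= s2^-1 by rewrite invr_ge0 ltW // (lt_trans hs1).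
have x_gap : `|lambda - alpha| < s1^-1 - s2^-1.
  by rewrite ltr_norml /alpha; apply/andP; split; lra.
have uw0 := dimer_eigvec_eq0 eq_even eq_odd u_end (erefl (u 0)) b_ge0 x_gap.
move/eqP: v_neq0; apply; apply/rowP => k; rewrite mxE -row_seq_ord.
have half_lt : (k./2 < m)%N by have := ltn_ord k; lia.
rewrite -(odd_double_half k); case: (odd k).
- by have [_] := uw0 _ half_lt; rewrite /w doubleS add1n.
- by have [] := uw0 _ (ltnW half_lt).
Qed.
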